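(* Let $k\in\mathbb{Z}$ and $\imath\in\mathbb{Z}_{>1}$. The rational polygon $\mathrm{conv}((0,0),(k,\imath),(k+2/5,\imath))$ is canonical if and only if the rational polygon $\mathrm{conv}((0,0),(k,\imath),(k+1/3,\imath))$ is canonical.
   Context: For rationals $a<b$ and $\imath\in\mathbb{Z}_{>1}$, the polygon $\mathrm{conv}((0,0),(a,\imath),(b,\imath))$ is called canonical if every lattice point $p\neq(0,0)$ in it satisfies $p_2=\imath$. *)

From HB Require Import structures.
From mathcomp Require Import all_boot all_order all_algebra.
Set Implicit Arguments. Unset Strict Implicit. Unset Printing Implicit Defensive.
Import Order.TTheory GRing.Theory Num.Theory.
Local Open Scope ring_scope.

Definition in_conv3 (P0 P1 P2 p : rat * rat) : Prop :=
  exists l0 l1 l2 : rat,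
    0 <= l0 /\ 0 <= l1 /\ 0 <= l2 /\ l0 + l1 + l2 = 1 /\
    p.1 = l0 * P0.1 + l1 * P1.1 + l2 * P2.1 /\
    p.2 = l0 * P0.2 + l1 * P1.2 + l2 * P2.2.

Definition canonical (a b : rat) (i : int) : Prop :=
  forall x y : int,
    in_conv3 (0, 0) (a, i%:~R) (b, i%:~R) (x%:~R, y%:~R) ->
    (x, y) <> (0, 0) -> y = i.

From mathcomp Require Import all_boot all_order all_algebra.
From mathcomp Require Import zify ring lra.
Import Order.TTheory GRing.Theory Num.Theory.
Local Open Scope ring_scope.

(* A lattice point (x, y) with 0 < y < i lies in conv((0,0),(k,i),(k+w,i)) iff
   its offset r = x i - k y satisfies 0 <= r <= w y, so canonicity says that no
   offset in [0, w y] occurs below the top edge.  As 1/3 < 2/5, one implication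
   is immediate.  Conversely let 5 r <= 2 y, so 2 r < y.  If g = gcd(k, i) > 1,
   the point (k/g, i/g) has offset 0.  Otherwise Bezout gives a point (x0, q)
   with 0 < q < i and offset 1, a witness for 1/3 unless q <= 2; but then
   y - q r = i (y x0 - q x) would be a multiple of i strictly between 0 and i. *)

Lemma in_conv3_triangleP (a w h X Y : rat) : 0 < w -> 0 < h ->
  in_conv3 (0, 0) (a, h) (a + w, h) (X, Y) <->
  [/\ 0 <= Y, Y <= h, 0 <= X * h - a * Y & X * h - a * Y <= w * Y].
Proof.
move=> w_gt0 h_gt0; split.
- move=> [l0 [l1 [l2 [l0_ge0 [l1_ge0 [l2_ge0 [sum1 [/= -> /= ->]]]]]]]].
  have -> : (l0 * 0 + l1 * a + l2 * (a + w)) * h - a * (l0 * 0 + l1 * h + l2 * h)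
            = l2 * w * h by ring.
  have -> : l0 * 0 + l1 * h + l2 * h = (1 - l0) * h by rewrite -sum1; ring.
  have l0h_ge0 : 0 <= l0 * h by rewrite mulr_ge0 // ltW.
  have l1wh_ge0 : 0 <= l1 * w * h by rewrite !mulr_ge0 // ltW.
  have l2wh_ge0 : 0 <= l2 * w * h by rewrite !mulr_ge0 // ltW.
  split=> //; nra.
- move=> [Y_ge0 Y_le_h off_ge0 off_le].
  exists (1 - Y / h), ((w * Y - (X * h - a * Y)) / (h * w)), ((X * h - a * Y) / (h * w)).
  split; first by rewrite subr_ge0 ler_pdivrMr // mul1r.
  split; first by rewrite divr_ge0 ?subr_ge0 // mulr_ge0 // ltW.
  split; first by rewrite divr_ge0 // mulr_ge0 // ltW.
  by rewrite /=; split; [|split]; field; rewrite !gt_eqF.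
Qed.

Lemma canonicalP (k i : int) (w : rat) : 0 < w -> 0 < i ->
  canonical k%:~R (k%:~R + w) i <->
  (forall x y : int, 0 < y < i -> 0 <= x * i - k * y ->
     w * y%:~R < (x * i - k * y)%:~R).
Proof.
move=> w_gt0 i_gt0; rewrite /canonical.
have i_gt0_rat : (0 : rat) < i%:~R by rewrite ltr0z.
have inP x y : in_conv3 (0, 0) (k%:~R, i%:~R) (k%:~R + w, i%:~R) (x%:~R, y%:~R) <->
    [/\ 0 <= y, y <= i, 0 <= x * i - k * y & (x * i - k * y)%:~R <= w * y%:~R].
  by rewrite in_conv3_triangleP // -intrM -intrM -intrB !ler0z ler_int.
split=> [canon x y /andP[y_gt0 y_lt_i] off_ge0 | outside x y].
- rewrite ltNge; apply/negP=> off_le.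
  have y_eq_i : y = i.
    by apply: (canon x) => [|[_ y0]]; [apply/inP; split=> //; lia | lia].
  lia.
- move=> /inP[y_ge0 y_le_i off_ge0 off_le] xy_neq0.
  have [y0 | y_gt0] := eqVneq y 0.
    have off0 : x * i - k * y = 0.
      apply/eqP; rewrite eq_le off_ge0 -(ler_int rat).
      by rewrite (le_trans off_le) // y0 mulr0.
    by exfalso; apply: xy_neq0; rewrite y0 in off0 *; congr pair; nia.
  case: (ltgtP y i) => [y_lt_i | | //]; last lia.
  have y_between : 0 < y < i by apply/andP; split; lia.
  by have := outside x y y_between off_ge0; rewrite ltNge off_le.
Qed.

Lemma ltr_fracMz (p q y r : int) : 0 < q ->
  (p%:~R / q%:~R * y%:~R < r%:~R :> rat) = (p * y < r * q).
Proof. by move=> q_gt0; rewrite mulrAC ltr_pdivrMr ?ltr0z // -!intrM ltr_int. Qed.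

Lemma bezout_unit_offset (k i : int) : 1 < i -> gcdz k i = 1 ->
  exists x q : int, 0 < q < i /\ x * i - k * q = 1.
Proof.
move=> i_gt1 coprime_ki.
have [u [v]] := Bezoutz k i; rewrite coprime_ki => bezout.
have i_neq0 : i != 0 by lia.
have u_div := divz_eq (- u) i.
set t := ((- u) %/ i)%Z in u_div; set q := ((- u) %% i)%Z in u_div.
have q_ge0 : 0 <= q by rewrite modz_ge0.
have q_lt_i : q < i by have := ltz_mod (- u) i_neq0; rewrite gtr0_norm //; lia.
have unit_offset : (v - k * t) * i - k * q = 1.
  by rewrite -bezout (_ : q = - u - t * i); [ring | rewrite u_div; ring].
exists (v - k * t), q; split=> //; apply/andP; split=> //.
rewrite lt_neqAle q_ge0 andbT; apply/eqP=> q0.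
move: unit_offset; rewrite -q0 mulr0 subr0; set a := v - k * t => ai1.
by have [a_le0 | a_gt0] := lerP a 0; nia.
Qed.

Lemma gcdz_neq1_zero_offset (k i : int) : 0 < i -> gcdz k i != 1 ->
  exists x y : int, 0 < y < i /\ x * i - k * y = 0.
Proof.
move=> i_gt0 g_neq1.
have g_gt1 : 1 < gcdz k i.
  have : gcdz k i != 0 by rewrite gcdz_eq0 negb_and (gt_eqF i_gt0) orbT.
  by have : 0 <= gcdz k i by []; lia.
have k_div := divzK (dvdz_gcdl k i); have i_div := divzK (dvdz_gcdr k i).
set g := gcdz k i in g_gt1 k_div i_div.
exists (k %/ g)%Z, (i %/ g)%Z; split; last by rewrite -{1}i_div -{2}k_div; ring.
by apply/andP; split; nia.
Qed.

Lemma exists_offset_le_of_lt (k i n : int) : 1 < i -> 0 < n ->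
  (exists x y : int, [/\ 0 < y < i, 0 <= x * i - k * y & (n - 1) * (x * i - k * y) < y]) ->
  exists x y : int, [/\ 0 < y < i, 0 <= x * i - k * y & n * (x * i - k * y) <= y].
Proof.
move=> i_gt1 n_gt0 [x [y [y_between off_ge0 off_small]]].
have [coprime_ki | g_neq1] := eqVneq (gcdz k i) 1; last first.
  have [x' [y' [y'_between off0]]] := gcdz_neq1_zero_offset k i (lt_trans ltr01 i_gt1) g_neq1.
  by exists x', y'; rewrite off0 mulr0; split=> //; lia.
have [x0 [q [q_between unit_offset]]] := bezout_unit_offset k i i_gt1 coprime_ki.
have [n_le_q | q_lt_n] := lerP n q.
  by exists x0, q; rewrite unit_offset mulr1; split=> //; lia.
exfalso; set r := x * i - k * y in off_ge0 off_small.
have i_dvd : i * (y * x0 - q * x) = y - q * r.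
  by rewrite -{2}[y]mulr1 -unit_offset /r; ring.
have qr_small : q * r <= (n - 1) * r by apply: ler_wpM2r; lia.
set m := y * x0 - q * x in i_dvd.
by have [m_le0 | m_gt0] := lerP m 0; nia.
Qed.

Theorem mainTheorem12 (k i : int) (hi : 1 < i) :
  canonical (k%:~R) (k%:~R + 2%:R / 5%:R) i <->
  canonical (k%:~R) (k%:~R + 1 / 3%:R) i.
Proof.
have i_gt0 : 0 < i by lia.
rewrite [X in canonical _ (_ + X) _ <-> _](_ : _ = (2 : int)%:~R / (5 : int)%:~R) //.
rewrite [X in _ <-> canonical _ (_ + X) _](_ : _ = (1 : int)%:~R / (3 : int)%:~R) //.
rewrite !(canonicalP k i _ _ i_gt0); try by rewrite divr_gt0 ?ltr0z.
split=> outside x y y_between off_ge0; rewrite ltr_fracMz //.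
- by have := outside x y y_between off_ge0; rewrite ltr_fracMz //; lia.
- rewrite ltNge; apply/negP=> off_le.
  have [|x' [y' [y'_between off'_ge0 off'_le]]] := exists_offset_le_of_lt k i 3 hi isT.
    by exists x, y; split=> //; lia.
  by have := outside x' y' y'_between off'_ge0; rewrite ltr_fracMz //; lia.
Qed.
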